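(* Let $\mathbb{F}$ be a field and $f(z)=\sum_{m\ge0}c_mz^m\in\mathbb{F}[[z]]$. Suppose there exist integers $\ell>k\ge1$ such that $H_\ell(f)H_k(f)\neq0$. Then the Padé approximant $[k-1/k]_f(z)$ exists, and there exist a nonzero element $h_k\in\mathbb{F}$ and an integer $k'$ with $k\le k'<\ell$ such that $$f(z)-[k-1/k]_f(z)=h_kz^{k+k'}+\mathcal{O}(z^{k+k'+1}).$$
   Context: For $n\ge1$, the Hankel determinant of $f$ is $H_n(f)=\det(c_{i+j})_{0\le i,j\le n-1}\in\mathbb{F}$, and $H_0(f)=1$. For nonnegative integers $p,q$, the Padé approximant $[p/q]_f(z)$ is the rational fraction $P(z)/Q(z)$ with $P,Q\in\mathbb{F}[z]$, $\deg P\le p$, $\deg Q\le q$, and $f(z)-P(z)/Q(z)=\mathcal{O}(z^{p+q+1})$ in $\mathbb{F}[[z]]$ (the fraction, when it exists, is unique). *)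

(* Formal power series over a field F are represented by
   their coefficient sequences  c : nat -> F. *)
From HB Require Import structures.
From mathcomp Require Import all_boot all_order all_algebra.
Set Implicit Arguments. Unset Strict Implicit. Unset Printing Implicit Defensive.
Import Order.TTheory GRing.Theory.
Local Open Scope ring_scope.

(* Hankel determinant H_n(f) = det (c_{i+j})_{0<=i,j<=n-1}; for n = 0 the
   0x0 determinant is 1, matching H_0(f) = 1. *)
Definition hankel (F : fieldType) (c : nat -> F) (n : nat) : F :=
  \det (\matrix_(i < n, j < n) c (i + j)%N).

(* First n+1 coefficients of the power series expansion of P/Q in F[[z]],
   for Q with Q(0) <> 0:  g_n = (P_n - sum_{i<n} Q_{n-i} g_i) / Q_0. *)
Fixpoint ratser_seq (F : fieldType) (P Q : {poly F}) (n : nat) : seq F :=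
  match n with
  | 0 => [:: P`_0 / Q`_0]
  | n'.+1 =>
      let s := ratser_seq P Q n' in
      rcons s ((P`_n - \sum_(i < n) Q`_(n - i) * s`_i) / Q`_0)
  end.

(* n-th coefficient of the power series P/Q (meaningful when Q`_0 != 0). *)
Definition ratser (F : fieldType) (P Q : {poly F}) (n : nat) : F :=
  nth 0 (ratser_seq P Q n) n.

(* P/Q is (a representative of) the Pade approximant [p/q]_f:
   deg P <= p, deg Q <= q, Q(0) <> 0 (so P/Q lies in F[[z]]), and
   f - P/Q = O(z^(p+q+1)). *)
Definition is_pade (F : fieldType) (c : nat -> F) (p q : nat)
    (P Q : {poly F}) : Prop :=
  [/\ (size P <= p.+1)%N, (size Q <= q.+1)%N, Q`_0 != 0 &
      forall m, (m < p + q + 1)%N -> c m - ratser P Q m = 0].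

From HB Require Import structures.
From mathcomp Require Import all_boot all_order all_algebra.
From mathcomp Require Import zify.
Import GRing.Theory.
Set Implicit Arguments. Unset Strict Implicit.
Local Open Scope ring_scope.

(* Write g = P/Q. Since Q(0) <> 0, f - g = O(z^N) iff Q f - P = O(z^N), and
   as deg P < k this says that the coefficients of Q f vanish in degrees
   k, ..., N-1: the reversed coefficient vector of Q is a left null vector of
   a block of rows of a Hankel matrix.  For N = 2k the block is the invertible
   matrix of H_k, which gives existence.  If the error vanished up to degree
   k+l-1, the same vector, padded with zeros, would be a nonzero left null
   vector of the matrix of H_l; hence the first nonzero error coefficient has
   index below k+l, and at least 2k by the Pade condition. *)

Section PolySeries.
Variable F : fieldType.
Implicit Types (P Q : {poly F}) (a b c : nat -> F).

Definition polyser_mul Q a n : F := \sum_(i < n.+1) Q`_(n - i) * a i.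

Lemma polyser_mulB Q a b n :
  polyser_mul Q (fun i => a i - b i) n = polyser_mul Q a n - polyser_mul Q b n.
Proof. by rewrite /polyser_mul -sumrB; apply: eq_bigr => i _; rewrite mulrBr. Qed.

Lemma polyser_mul_eq0 Q a N : Q`_0 != 0 ->
  (forall n, (n < N)%N -> polyser_mul Q a n = 0) ->
  forall m, (m < N)%N -> a m = 0.
Proof.
move=> Q0 Qa0; elim/ltn_ind => m IH ltmN.
have := Qa0 m ltmN; rewrite /polyser_mul big_ord_recr /= subnn big1 ?add0r.
  by move/eqP; rewrite mulf_eq0 (negbTE Q0) => /eqP.
by move=> i _; rewrite IH ?mulr0 //; apply: ltn_trans (ltn_ord i) ltmN.
Qed.

Lemma polyser_mul_window Q a k r : (size Q <= k.+1)%N ->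
  polyser_mul Q a (r + k) = \sum_(s < k.+1) Q`_(k - s) * a (r + s)%N.
Proof.
move=> szQ; rewrite /polyser_mul -(big_mkord xpredT (fun i => Q`_(r + k - i) * a i)).
rewrite (@big_cat_nat _ _ _ r 0) /=; [|lia|lia].
rewrite big_nat_cond big1 ?add0r; last first.
  move=> i /andP[/andP[_ ltir] _]; rewrite nth_default ?mul0r //.
  by apply: leq_trans szQ _; lia.
rewrite -{1}(add0n r) big_addn -(big_mkord xpredT (fun s => Q`_(k - s) * a (r + s)%N)).
have -> : ((r + k).+1 - r = k.+1)%N by lia.
by apply: eq_bigr => i _; congr (Q`_ _ * a _); lia.
Qed.

Lemma size_ratser_seq P Q n : size (ratser_seq P Q n) = n.+1.
Proof. by elim: n => [|n IH] //=; rewrite size_rcons IH. Qed.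

Lemma nth_ratser_seq P Q n i : (i <= n)%N -> (ratser_seq P Q n)`_i = ratser P Q i.
Proof.
elim: n => [|n IH]; first by rewrite leqn0 => /eqP ->.
rewrite leq_eqVlt => /orP[/eqP -> //|]; rewrite ltnS => lein.
by rewrite /= nth_rcons size_ratser_seq ltnS lein IH.
Qed.

Lemma ratserS P Q n : ratser P Q n.+1 =
  (P`_n.+1 - \sum_(i < n.+1) Q`_(n.+1 - i) * ratser P Q i) / Q`_0.
Proof.
rewrite /ratser /= nth_rcons size_ratser_seq ltnn eqxx; congr ((_ - _) / _).
by apply: eq_bigr => i _; rewrite nth_ratser_seq // -ltnS.
Qed.

Lemma polyser_mul_ratser P Q n : Q`_0 != 0 -> polyser_mul Q (ratser P Q) n = P`_n.
Proof.
move=> Q0; rewrite /polyser_mul big_ord_recr /= subnn.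
case: n => [|n]; first by rewrite big_ord0 add0r /ratser /= mulrC divfK.
by rewrite ratserS mulrC divfK // addrC subrK.
Qed.

Lemma polyser_mul_ratser_err c P Q n : Q`_0 != 0 ->
  polyser_mul Q (fun m => c m - ratser P Q m) n = polyser_mul Q c n - P`_n.
Proof. by move=> Q0; rewrite polyser_mulB polyser_mul_ratser. Qed.

Lemma pade_err_recurrence c p P Q N : (size P <= p.+1)%N -> Q`_0 != 0 ->
  (forall m, (m < N)%N -> c m - ratser P Q m = 0) ->
  forall n, (p < n < N)%N -> polyser_mul Q c n = 0.
Proof.
move=> szP Q0 err0 n /andP[ltpn ltnN].
have : polyser_mul Q (fun m => c m - ratser P Q m) n = 0.
  rewrite /polyser_mul big1 // => i _; rewrite err0 ?mulr0 //.
  by apply: leq_ltn_trans ltnN; rewrite -ltnS.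
rewrite polyser_mul_ratser_err // nth_default ?subr0 //.
exact: leq_trans szP ltpn.
Qed.

Lemma is_pade_of_recurrence c p q Q : (size Q <= q.+1)%N -> Q`_0 != 0 ->
  (forall m, (p < m < p + q + 1)%N -> polyser_mul Q c m = 0) ->
  is_pade c p q (\poly_(j < p.+1) polyser_mul Q c j) Q.
Proof.
move=> szQ Q0 Qc0; split=> //.
set P := \poly_(j < p.+1) _.
apply: (polyser_mul_eq0 (a := fun m => c m - ratser P Q m) Q0) => n ltnN.
rewrite polyser_mul_ratser_err // coef_poly ltnS.
by case: leqP => [|ltpn]; rewrite ?subrr // Qc0 ?subr0 ?ltpn.
Qed.

End PolySeries.

Lemma hankel_denominator (F : fieldType) (c : nat -> F) n : hankel c n.+1 != 0 ->
  exists Q : {poly F}, [/\ (size Q <= n.+2)%N, Q`_0 = 1 &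
    forall m, (n < m < n + n.+1 + 1)%N -> polyser_mul Q c m = 0].
Proof.
move=> Hn0; set H := \matrix_(i < n.+1, j < n.+1) c (i + j)%N.
have Hunit : H \in unitmx by rewrite unitmxE unitfE.
set b := \row_(r < n.+1) - c (r + n.+1)%N; set y := b *m invmx H.
have yH (r : 'I_n.+1) : \sum_(s < n.+1) y 0 s * c (s + r)%N = - c (r + n.+1)%N.
  have /matrixP /(_ 0 r) := mulmxKV Hunit b.
  by rewrite !mxE => <-; apply: eq_bigr => s _; rewrite [H s r]mxE.
exists (\poly_(j < n.+2) (if j == 0%N then 1 else y 0 (inord (n.+1 - j)))).
split; [exact: size_poly | by rewrite coef_poly |].
move=> m /andP[ltnm ltm2n]; have -> : m = ((m - n.+1) + n.+1)%N by lia.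
rewrite polyser_mul_window ?size_poly // big_ord_recr /= subnn coef_poly /=.
rewrite mul1r; apply/eqP; rewrite addr_eq0 -(inordK (_ : m - n.+1 < n.+1)%N); last by lia.
rewrite -yH; apply/eqP/eq_bigr => s _; rewrite coef_poly.
have ltsn := ltn_ord s.
have -> : (n.+1 - s < n.+2)%N by lia.
have -> : (n.+1 - s == 0)%N = false by apply/negbTE; lia.
have -> : (n.+1 - (n.+1 - s) = s)%N by lia.
by rewrite inord_val addnC.
Qed.

Lemma hankel_eq0_of_recurrence (F : fieldType) (c : nat -> F) (Q : {poly F}) k l :
  (k < l)%N -> (size Q <= k.+1)%N -> Q`_0 != 0 ->
  (forall n, (k <= n < k + l)%N -> polyser_mul Q c n = 0) -> hankel c l = 0.
Proof.
move=> ltkl szQ Q0 Qc0; apply/eqP/det0P.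
exists (\row_(s < l) if (s <= k)%N then Q`_(k - s) else 0).
  apply/negP => /eqP/matrixP /(_ 0 (Ordinal ltkl)).
  by rewrite !mxE /= leqnn subnn; apply/eqP.
apply/matrixP => i j; rewrite !mxE.
transitivity (polyser_mul Q c (j + k)); last by apply: Qc0; have := ltn_ord j; lia.
rewrite polyser_mul_window // (big_ord_widen _ (fun s => Q`_(k - s) * c (j + s)%N) ltkl).
rewrite [RHS]big_mkcond; apply: eq_bigr => s _; rewrite !mxE ltnS.
by case: ifP => _; rewrite ?mul0r // addnC.
Qed.

Theorem theorem3p1 (F : fieldType) (c : nat -> F) (k l : nat) :
  (1 <= k)%N -> (k < l)%N -> hankel c l * hankel c k != 0 ->
  (exists P Q : {poly F}, is_pade c k.-1 k P Q) /\
  (forall P Q : {poly F}, is_pade c k.-1 k P Q ->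
     exists (h : F) (k' : nat),
       [/\ h != 0, (k <= k')%N, (k' < l)%N,
           (forall m, (m < k + k')%N -> c m - ratser P Q m = 0) &
           c (k + k')%N - ratser P Q (k + k')%N = h]).
Proof.
move=> k_gt0 ltkl; rewrite mulf_eq0 negb_or => /andP[Hl0 Hk0]; split.
  case: k k_gt0 ltkl Hk0 => // n _ _ /hankel_denominator[Q [szQ Q0 Qc0]].
  by exists (\poly_(j < n.+1) polyser_mul Q c j), Q; apply: is_pade_of_recurrence;
    rewrite ?Q0 ?oner_neq0.
move=> P Q [szP szQ Q0 pade].
have [|err0] := boolP [exists m : 'I_(k + l), c m - ratser P Q m != 0]; last first.
  case/eqP: Hl0; apply: (hankel_eq0_of_recurrence ltkl szQ Q0) => n /andP[lekn ltn].
  apply: (pade_err_recurrence (N := k + l) szP Q0); last by rewrite prednK // lekn.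
  by move=> m ltm; apply/eqP/negPn; move/existsPn: err0 => /(_ (Ordinal ltm)).
case/existsP=> m0 errm0.
have [|m errm minm] := @ex_minnP (fun m => c m - ratser P Q m != 0); first by exists m0.
have ltm : (m < k + l)%N by apply: leq_ltn_trans (minm _ errm0) (ltn_ord m0).
have le2km : (k + k <= m)%N.
  by rewrite leqNgt; apply: contra errm => ltm2k; rewrite pade //; lia.
exists (c m - ratser P Q m), (m - k)%N; rewrite subnKC; last by lia.
split=> //; try lia.
by move=> i ltim; apply/eqP/negPn; apply: contra_ltnN ltim => /minm.
Qed.
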